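(* Let $a$ be an automatic sequence and $\alpha$ a letter such that the logarithmic density $\lim_{N\to\infty}\frac1{\log N}\sum_{n\le N}\frac1n\mathbf 1_{[a(n)=\alpha]}$ equals $0$. Then the density $\lim_{N\to\infty}\frac1N\sum_{n\le N}\mathbf 1_{[a(n)=\alpha]}$ exists and equals $0$.
   Context: A sequence $a$ on a finite alphabet is automatic if for some $k\ge2$ there is a finite set of states $Q$, a transition map $\delta:Q\times\{0,\dots,k-1\}\to Q$ extended to words letter by letter, an initial state $q_0$ and an output map $\tau$ with $a(n)=\tau(\delta(q_0,(n)_k))$, $(n)_k$ being the base-$k$ expansion of $n$ (most significant digit first). *)

From HB Require Import structures.
From mathcomp Require Import all_boot all_order all_algebra.
From mathcomp Require Import all_classical all_reals all_analysis.
Set Implicit Arguments. Unset Strict Implicit. Unset Printing Implicit Defensive.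
Import Order.TTheory GRing.Theory Num.Theory.

(* base-k digits of n, least significant first (fuel = n suffices for k >= 2);
   the expansion of 0 is the empty word *)
Fixpoint digits_lsb (k fuel n : nat) : seq nat :=
  match fuel with
  | 0 => [::]
  | f.+1 => if n == 0 then [::] else n %% k :: digits_lsb k f (n %/ k)
  end.

Definition base_expansion (k n : nat) : seq nat := rev (digits_lsb k n n).

Definition delta_word (Q : Type) (delta : Q -> nat -> Q) (q : Q) (w : seq nat) : Q :=
  foldl delta q w.

Definition is_automatic (T : Type) (a : nat -> T) : Prop :=
  exists k : nat, (2 <= k)%N /\
    exists (Q : finType) (delta : Q -> nat -> Q) (q0 : Q) (tau : Q -> T),
      forall n : nat, a n = tau (delta_word delta q0 (base_expansion k n)).

(* For m > 0 the letters a(n) on the block [m k^l, (m+1) k^l) are read off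
   from the automaton state q reached on (m)_k, so the number g q l of
   occurrences of alpha in that block depends on q alone.  Cutting a block of
   length k^L into blocks of length k^l, l <= L, bounds its density by
   (sum of g q l over the reachable q) / k^l.
   The blocks of m at the scales l < L are disjoint subsets of [m, m k^L) on
   which 1/n >= 1/((m+1) k^l); zero logarithmic density therefore makes the mean
   over l < L of g q l / k^l tend to 0 for each of the finitely many reachable q.
   Averaging the first bound over l < L yields a length k^L such that every
   block of that length has density at most eps, and covering [1, N] by such
   blocks bounds the density up to N by eps + k^L / N. *)

From HB Require Import structures.
From mathcomp Require Import all_boot all_order all_algebra.
From mathcomp Require Import all_classical all_reals all_analysis.
From mathcomp Require Import zify ring lra.
Import Order.TTheory GRing.Theory Num.Theory.
Import numFieldNormedType.Exports.
Set Implicit Arguments. Unset Strict Implicit. Unset Printing Implicit Defensive.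

Lemma sum_nat_blocks (F : nat -> nat) c K :
  (\sum_(0 <= r < c * K) F r = \sum_(0 <= j < c) \sum_(0 <= r < K) F (j * K + r))%N.
Proof.
elim: c => [|c IH]; first by rewrite mul0n !big_geq.
rewrite big_nat_recr //= mulSnr (big_cat_nat _ (n := c * K)) ?leq_addr //= IH.
congr (_ + _)%N; rewrite -{1}(add0n (c * K)) big_addn addKn.
by apply: eq_big_nat => i _; rewrite addnC.
Qed.

Section BaseExpansion.
Variable k : nat.
Hypothesis k_gt1 : (1 < k)%N.

Lemma digits_lsb_fuel f f' n : (n <= f)%N -> (n <= f')%N ->
  digits_lsb k f n = digits_lsb k f' n.
Proof.
elim: f f' n => [|f IH] f' n; first by rewrite leqn0 => /eqP ->; case: f'.
case: f' => [|f'] nf nf'; first by move: nf'; rewrite leqn0 => /eqP ->.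
rewrite /=; case: eqP => // /eqP n_neq0.
have lt_div : (n %/ k < n)%N by rewrite ltn_Pdiv // lt0n.
by congr (_ :: _); apply: IH; rewrite -ltnS; apply: leq_trans lt_div _.
Qed.

Lemma digits_lsbS n : (0 < n)%N ->
  digits_lsb k n n = n %% k :: digits_lsb k (n %/ k) (n %/ k).
Proof.
case: n => // n _ /=; congr (_ :: _); apply: digits_lsb_fuel => //.
by rewrite -ltnS ltn_Pdiv.
Qed.

Fixpoint low_digits l r : seq nat :=
  if l is l'.+1 then r %% k :: low_digits l' (r %/ k) else [::].

Lemma digits_lsb_mulD l m r : (0 < m)%N -> (r < k ^ l)%N ->
  digits_lsb k (m * k ^ l + r) (m * k ^ l + r) = low_digits l r ++ digits_lsb k m m.
Proof.
have k_gt0 : (0 < k)%N by apply: ltnW.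
elim: l m r => [|l IH] m r m_gt0.
  by rewrite expn0 ltnS leqn0 => /eqP ->; rewrite muln1 addn0.
move=> r_lt; rewrite digits_lsbS; last by rewrite ltn_addr // muln_gt0 m_gt0 expn_gt0 k_gt0.
have -> : (m * k ^ l.+1 + r = m * k ^ l * k + r)%N by rewrite expnSr mulnA.
by rewrite modnMDl divnMDl // IH //= ltn_divLR // -expnSr.
Qed.

Lemma base_expansion_mulD l m r : (0 < m)%N -> (r < k ^ l)%N ->
  base_expansion k (m * k ^ l + r) = base_expansion k m ++ rev (low_digits l r).
Proof. by move=> m_gt0 r_lt; rewrite /base_expansion digits_lsb_mulD // rev_cat. Qed.

End BaseExpansion.

Section BlockCounts.
Variables (k : nat) (b : nat -> bool).
Hypothesis k_gt1 : (1 < k)%N.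

Definition block_count m l := (\sum_(0 <= r < k ^ l) b (m * k ^ l + r))%N.

Lemma block_countS m l :
  block_count m l.+1 = (\sum_(0 <= j < k) block_count (m * k + j) l)%N.
Proof.
rewrite /block_count expnS sum_nat_blocks; apply: eq_big_nat => j _.
by apply: eq_big_nat => r _; rewrite !mulnDl addnA -mulnA.
Qed.

Lemma block_count_le m l : (block_count m l <= k ^ l)%N.
Proof.
apply: leq_trans (_ : \sum_(0 <= r < k ^ l) 1 <= _)%N.
  by apply: leq_sum => r _; apply: leq_b1.
by rewrite sum_nat_const_nat subn0 muln1.
Qed.

Lemma count_le_block_counts l N :
  (\sum_(1 <= n < N.+1) b n <= k ^ l + \sum_(1 <= j < (N %/ k ^ l).+1) block_count j l)%N.
Proof.
have kl_gt0 : (0 < k ^ l)%N by rewrite expn_gt0 ltnW.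
have N_lt : (N.+1 <= (N %/ k ^ l).+1 * k ^ l)%N by apply: ltn_ceil.
apply: leq_trans (_ : \sum_(0 <= n < (N %/ k ^ l).+1 * k ^ l) b n <= _)%N.
  rewrite [X in (_ <= X)%N](big_cat_nat (n := N.+1)) //= (big_ltn (m := 0)) //=.
  by rewrite -addnA addnCA leq_addr.
rewrite (sum_nat_blocks (fun n => b n)) big_ltn //= leq_add2r.
exact: (block_count_le 0 l).
Qed.

Variable R : realType.
Local Open Scope classical_set_scope.
Local Open Scope ring_scope.

Lemma count_le_of_block_bound (eps : R) l N : 0 <= eps ->
    (forall m, (0 < m)%N -> (block_count m l)%:R <= eps * (k ^ l)%:R) ->
  \sum_(1 <= n < N.+1) ((b n)%:R : R) <= (k ^ l)%:R + eps * N%:R.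
Proof.
move=> eps_ge0 block_bound; rewrite -natr_sum.
apply: le_trans (_ : (k ^ l + \sum_(1 <= j < (N %/ k ^ l).+1) block_count j l)%:R <= _).
  by rewrite ler_nat count_le_block_counts.
rewrite natrD lerD2l natr_sum.
apply: le_trans (_ : \sum_(1 <= j < (N %/ k ^ l).+1) (eps * (k ^ l)%:R) <= _).
  by apply: ler_sum_nat => j /andP [j_gt0 _]; apply: block_bound.
rewrite sumr_const_nat subn1 -mulrnAr ler_wpM2l // -mulr_natr -natrM ler_nat.
by rewrite mulnC leq_divM.
Qed.

Lemma density0_of_block_bounds :
    (forall eps : R, 0 < eps -> exists l,
      forall m, (0 < m)%N -> (block_count m l)%:R <= eps * (k ^ l)%:R) ->
  ((N%:R : R)^-1 * \sum_(1 <= n < N.+1) ((b n)%:R : R)) @[N --> \oo] --> 0.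
Proof.
move=> block_bounds; apply/cvgrPdist_lt => e e_gt0.
have e2_gt0 : 0 < e / 2 by rewrite divr_gt0.
have [l block_bound] := block_bounds _ e2_gt0.
have [N0 N0_gt] : exists N0 : nat, (k ^ l)%:R / (e / 2) < N0%:R :> R.
  by eexists; apply: truncnS_gt.
exists N0.+1 => // N N0_lt /=.
have N_gt0 : 0 < N%:R :> R by rewrite ltr0n; apply: leq_trans N0_lt.
rewrite sub0r normrN ger0_norm; last first.
  by rewrite mulr_ge0 ?invr_ge0 ?ler0n // sumr_ge0.
apply: le_lt_trans (ler_wpM2l _ (count_le_of_block_bound N (ltW e2_gt0) block_bound)) _.
  by rewrite invr_ge0 ler0n.
have kl_lt : (k ^ l)%:R / (e / 2) < N%:R :> R.
  by apply: lt_le_trans N0_gt _; rewrite ler_nat ltnW.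
rewrite mulrDr.
have -> : (N%:R)^-1 * (e / 2 * N%:R) = e / 2 by field; rewrite gt_eqF.
suff : (N%:R)^-1 * (k ^ l)%:R < e / 2 by lra.
by rewrite mulrC ltr_pdivrMr // mulrC -ltr_pdivrMr.
Qed.

Definition harmonic_count N : R := \sum_(1 <= n < N) (n%:R)^-1 * (b n)%:R.

Lemma harmonic_count_ge0 N : 0 <= harmonic_count N.
Proof. by apply: sumr_ge0 => n _; rewrite mulr_ge0 // invr_ge0. Qed.

Lemma harmonic_count_mono x y : (1 <= x)%N -> (x <= y)%N ->
  harmonic_count x <= harmonic_count y.
Proof.
move=> x_ge1 xy; rewrite /harmonic_count (big_cat_nat x_ge1 xy) /= lerDl.
by apply: sumr_ge0 => n _; rewrite mulr_ge0 // invr_ge0.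
Qed.

Lemma block_density_le_harmonic m L : (0 < m)%N ->
  (block_count m L)%:R / (k ^ L)%:R <=
  m.+1%:R * \sum_(m * k ^ L <= n < m.+1 * k ^ L) (n%:R : R)^-1 * (b n)%:R.
Proof.
move=> m_gt0; have kL_gt0 : (0 < k ^ L)%N by rewrite expn_gt0 ltnW.
rewrite /block_count natr_sum mulr_suml mulr_sumr.
rewrite [X in _ <= X](_ : _ = \sum_(0 <= r < k ^ L)
    m.+1%:R * (((m * k ^ L + r)%:R)^-1 * (b (m * k ^ L + r))%:R)); last first.
  rewrite -{1}(add0n (m * k ^ L)%N) big_addn mulSnr addKn.
  by apply: eq_bigr => r _; rewrite addnC.
apply: ler_sum_nat => r /andP [_ r_lt].
rewrite mulrA mulrC; apply: ler_wpM2r => //.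
rewrite ler_pdivlMr ?ltr0n ?addn_gt0 ?muln_gt0 ?m_gt0 ?kL_gt0 //.
rewrite mulrC ler_pdivrMr ?ltr0n // -natrM ler_nat.
by rewrite mulSnr leq_add2l ltnW.
Qed.

Lemma sum_block_densities_le_harmonic m L : (0 < m)%N ->
  \sum_(0 <= l < L) (block_count m l)%:R / (k ^ l)%:R <=
  m.+1%:R * harmonic_count (m * k ^ L).
Proof.
move=> m_gt0; elim: L => [|L IH].
  by rewrite big_geq // mulr_ge0 ?harmonic_count_ge0.
have kL_gt0 : (0 < k ^ L)%N by rewrite expn_gt0 ltnW.
have mkL_ge1 : (1 <= m * k ^ L)%N by rewrite muln_gt0 m_gt0.
have mkL_le : (m * k ^ L <= m.+1 * k ^ L)%N by rewrite leq_mul2r leqnSn orbT.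
have mkL_leS : (m.+1 * k ^ L <= m * k ^ L.+1)%N.
  by rewrite expnSr mulnA; move: (k ^ L)%N kL_gt0 => x x_gt0; nia.
rewrite big_nat_recr //=.
apply: le_trans (_ : m.+1%:R * harmonic_count (m.+1 * k ^ L) <= _); last first.
  by rewrite ler_wpM2l // harmonic_count_mono // (leq_trans mkL_ge1).
rewrite /harmonic_count (big_cat_nat mkL_ge1 mkL_le) /= mulrDr.
exact: lerD IH (block_density_le_harmonic L m_gt0).
Qed.

Definition mean_block_density m L : R :=
  (L%:R)^-1 * \sum_(0 <= l < L) (block_count m l)%:R / (k ^ l)%:R.

Section LogDensityZero.
Hypothesis log_density0 :
  ((ln (N%:R : R))^-1 * harmonic_count N.+1) @[N --> \oo] --> 0.

Lemma harmonic_count_le_ln eta : 0 < eta ->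
  exists N0, forall N, (N0 <= N)%N -> harmonic_count N.+1 <= eta * ln N%:R.
Proof.
move=> eta_gt0; move/cvgrPdist_lt: log_density0 => /(_ eta eta_gt0) [N0 _ near_N0].
exists N0.+2 => N N_ge.
have ln_gt0 : 0 < ln (N%:R : R) by apply: ln_gt0; rewrite ltr1n; apply: leq_trans N_ge.
have : `|0 - (ln N%:R)^-1 * harmonic_count N.+1| < eta.
  by apply: near_N0; rewrite /=; apply: leq_trans N_ge; rewrite ltnW.
rewrite sub0r normrN => /(le_lt_trans (ler_norm _)) /ltW.
by rewrite mulrC ler_pdivrMr.
Qed.

Lemma mean_block_density_small m eps : (0 < m)%N -> 0 < eps ->
  \forall L \near \oo, mean_block_density m L <= eps.
Proof.
move=> m_gt0 eps_gt0; have k_gt0 : (0 < k)%N by apply: ltnW.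
set c := ln ((m * k)%:R : R).
have c_gt0 : 0 < c by apply: ln_gt0; rewrite ltr1n (leq_mul m_gt0 k_gt1).
have m1c_gt0 : 0 < m.+1%:R * c by rewrite mulr_gt0.
have [N0 harmonic_le] := harmonic_count_le_ln (divr_gt0 eps_gt0 m1c_gt0).
exists N0.+2 => // L /= L_ge.
have mkL_gt : (N0.+2 < m * k ^ L)%N.
  by have := ltn_expl L k_gt1; move: (k ^ L)%N => x; nia.
set N := (m * k ^ L).-1.
have NS : N.+1 = (m * k ^ L)%N by rewrite prednK //; apply: leq_trans mkL_gt.
have ln_le : ln (N%:R : R) <= c *+ L.
  rewrite -lnXn ?ltr0n ?muln_gt0 ?m_gt0 // ler_ln ?posrE ?exprn_gt0 ?ltr0n ?muln_gt0 ?m_gt0 //;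
    last by rewrite /N; nia.
  rewrite -natrX ler_nat expnMn /N; apply: leq_trans (leq_pred _) _.
  by rewrite leq_mul // -{1}(expn1 m) leq_pexp2l //; apply: leq_trans L_ge.
apply: le_trans (_ : (L%:R)^-1 * (m.+1%:R * (eps / (m.+1%:R * c) * (c *+ L))) <= _).
  rewrite ler_wpM2l ?invr_ge0 //.
  apply: le_trans (sum_block_densities_le_harmonic L m_gt0) _.
  rewrite ler_wpM2l // -NS; apply: le_trans (harmonic_le N _) _; first by rewrite /N; nia.
  by rewrite ler_wpM2l // ltW // divr_gt0.
suff -> : (L%:R)^-1 * (m.+1%:R * (eps / (m.+1%:R * c) * (c *+ L))) = eps by [].
have L_gt0 : (0 < L)%N by apply: leq_trans L_ge.
by rewrite -mulr_natr; field; rewrite !gt_eqF ?ltr0n.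
Qed.

Section FiniteBlockTypes.
Variables (Q : finType) (s : nat -> Q) (g : Q -> nat -> nat).
Hypothesis block_count_type : forall m l, (0 < m)%N -> block_count m l = g (s m) l.

Definition reachable : {set Q} := [set q | `[< exists2 m, (0 < m)%N & s m = q >]].

Lemma mem_reachable m : (0 < m)%N -> s m \in reachable.
Proof. by move=> m_gt0; rewrite inE; apply/asboolP; exists m. Qed.

Definition reachable_count l := (\sum_(q in reachable) g q l)%N.

Lemma block_count_le_reachable l t m : (0 < m)%N ->
  (block_count m (l + t) <= k ^ t * reachable_count l)%N.
Proof.
elim: t m => [|t IH] m m_gt0.
  rewrite addn0 expn0 mul1n block_count_type // /reachable_count.
  by rewrite (bigD1 (s m)) ?mem_reachable //= leq_addr.
rewrite addnS block_countS expnS -mulnA.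
have -> : (k * (k ^ t * reachable_count l) = \sum_(0 <= j < k) k ^ t * reachable_count l)%N.
  by rewrite sum_nat_const_nat subn0.
apply: leq_sum => j _; apply: IH.
by rewrite addn_gt0 muln_gt0 m_gt0 ltnW.
Qed.

Lemma block_density_le_reachable l L m : (0 < m)%N -> (l <= L)%N ->
  (block_count m L)%:R / (k ^ L)%:R <= (reachable_count l)%:R / (k ^ l)%:R :> R.
Proof.
move=> m_gt0 lL; have k_gt0 : (0 < k)%N by apply: ltnW.
have := block_count_le_reachable l (L - l) m_gt0; rewrite subnKC // => count_le.
rewrite ler_pdivrMr ?ltr0n ?expn_gt0 ?k_gt0 // mulrAC ler_pdivlMr ?ltr0n ?expn_gt0 ?k_gt0 //.
have -> : (k ^ L = k ^ (L - l) * k ^ l)%N by rewrite -expnD subnK.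
by rewrite -!natrM ler_nat mulnA leq_mul2r (mulnC (reachable_count l)) count_le orbT.
Qed.

Definition mean_type_density q L : R :=
  (L%:R)^-1 * \sum_(0 <= l < L) (g q l)%:R / (k ^ l)%:R.

Lemma uniform_block_bound (eps : R) : 0 < eps ->
  exists l, forall m, (0 < m)%N -> (block_count m l)%:R <= eps * (k ^ l)%:R.
Proof.
move=> eps_gt0; have k_gt0 : (0 < k)%N by apply: ltnW.
have Q_gt0 : (0 < #|Q|)%N by apply/card_gt0P; exists (s 0).
have eps'_gt0 : 0 < eps / #|Q|%:R by rewrite divr_gt0 // ltr0n.
have : \forall L \near \oo, forall q, q \in reachable -> mean_type_density q L <= eps / #|Q|%:R.
  apply: filter_forall => q; have [|q_unreachable] := boolP (q \in reachable); last first.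
    by apply: nearW => L /negP.
  rewrite inE => /asboolP [m m_gt0 <-].
  apply: filterS (mean_block_density_small m_gt0 eps'_gt0) => L mean_le _.
  by rewrite /mean_type_density; under eq_bigr => l _ do rewrite -block_count_type //.
move=> [L0 _ /(_ L0.+1 (leqnSn L0)) mean_le]; exists L0.+1 => m m_gt0.
set L := L0.+1.
rewrite -ler_pdivrMr ?ltr0n ?expn_gt0 ?k_gt0 //.
apply: le_trans (_ : \sum_(q in reachable) mean_type_density q L <= _); last first.
  apply: le_trans (_ : \sum_(q in reachable) (eps / #|Q|%:R) <= _).
    by apply: ler_sum => q; apply: mean_le.
  rewrite sumr_const -[_ *+ _]mulr_natr mulrAC ler_pdivrMr ?ltr0n //.
  by apply: ler_wpM2l; [exact: ltW | rewrite ler_nat max_card].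
rewrite /mean_type_density -mulr_sumr exchange_big /=.
apply: le_trans (_ : (L%:R)^-1 * \sum_(0 <= l < L) (block_count m L)%:R / (k ^ L)%:R <= _).
  by rewrite sumr_const_nat subn0 -(mulr_natl ((block_count m L)%:R / _)) mulKf // pnatr_eq0.
rewrite ler_wpM2l ?invr_ge0 //.
apply: ler_sum_nat => l /andP [_ l_lt]; rewrite -mulr_suml -natr_sum.
exact: block_density_le_reachable (ltnW l_lt).
Qed.

End FiniteBlockTypes.
End LogDensityZero.
End BlockCounts.

Local Open Scope classical_set_scope.
Local Open Scope ring_scope.

Unset Implicit Arguments.
Set Strict Implicit.

Theorem lemma3p6 (R : realType) (T : finType) (a : nat -> T) (alpha : T) :
  is_automatic a ->
  ((ln (N%:R : R))^-1 *
      \sum_(1 <= n < N.+1) (n%:R)^-1 * ((a n == alpha)%:R : R))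
    @[N --> \oo] --> (0 : R) ->
  ((N%:R : R)^-1 * \sum_(1 <= n < N.+1) ((a n == alpha)%:R : R))
    @[N --> \oo] --> (0 : R).
Proof.
move=> [k [k_gt1 [Q [delta [q0 [tau a_auto]]]]]] log_density0.
pose state n := delta_word delta q0 (base_expansion k n).
pose type_count q l := (\sum_(0 <= r < k ^ l)
  (tau (delta_word delta q (rev (low_digits k l r))) == alpha))%N.
have block_count_type m l : (0 < m)%N ->
    block_count k (fun n => a n == alpha) m l = type_count (state m) l.
  move=> m_gt0; apply: eq_big_nat => r /andP [_ r_lt].
  by rewrite a_auto base_expansion_mulD // /delta_word foldl_cat.
by move/(density0_of_block_bounds k_gt1):
  (uniform_block_bound k_gt1 log_density0 block_count_type).
Qed.
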